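(* Let $S$ be a compact, metrizable, separable space, let $A$ be the generator of a Feller semigroup on $C(S)$ with resolvent $R_\lambda=(\lambda-A)^{-1}$, $\lambda>0$, and let $\ell_\lambda$, $\lambda>0$, be the Laplace transform of an exit law for $A$. For $x\in S$ let $m_x$ be the Borel sub-probability measure on $[0,\infty)$ such that $\ell_\lambda(x)=\int_{[0,\infty)}e^{-\lambda t}\,m_x(\mathrm dt)$ for all $\lambda>0$. Then $m_x(\{0\})=0$ for every $x\in S$.
   Context: A Feller semigroup is a strongly continuous semigroup of positive contractions on $C(S)$ (real continuous functions, sup norm) with $T(0)=I$, not necessarily conservative. A family $\ell_\lambda$, $\lambda>0$, is the Laplace transform of an exit law for $A$ if: (a) $(0,\infty)\ni\lambda\mapsto\ell_\lambda\in C(S)$ is locally bounded, non-negative and not identically zero (i.e. $\ell_\lambda\neq0$ for at least one $\lambda$); (b) $\lim_{\lambda\to0+}\ell_\lambda(x)\le1$ for each $x\in S$; (c) $(\lambda-\mu)R_\lambda\ell_\mu=\ell_\mu-\ell_\lambda$ for all $\lambda,\mu>0$. For such $\ell_\lambda$, for each $x$ the function $\lambda\mapsto\ell_\lambda(x)$ is completely monotone with $\lim_{\lambda\to0+}\ell_\lambda(x)\le 1$, so by Bernstein's theorem there is a (unique) Borel sub-probability measure $m_x$ on $[0,\infty)$ with $\ell_\lambda(x)=\int e^{-\lambda t}m_x(\mathrm dt)$. *)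

From HB Require Import structures.
From mathcomp Require Import all_boot all_order all_algebra.
From mathcomp Require Import all_classical all_reals all_analysis.
Set Implicit Arguments. Unset Strict Implicit. Unset Printing Implicit Defensive.
Import Order.TTheory GRing.Theory Num.Theory.
Import numFieldNormedType.Exports.
Local Open Scope classical_set_scope.
Local Open Scope ring_scope.

(* C(S) is represented by the continuous functions S -> R; the sup-norm
   contraction property is written out pointwise. Operators on C(S) are
   modelled as maps (S -> R) -> (S -> R); only their values on continuous
   functions matter. *)

Section Feller.
Context {R : realType} {S : topologicalType}.

Definition cfun (f : S -> R) := continuous f.

(* Feller semigroup: strongly continuous semigroup (t >= 0) of positive
   contractions of C(S), with T(0) = I (not necessarily conservative). *)
Definition is_feller_semigroup (T : R -> (S -> R) -> (S -> R)) : Prop :=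
      (forall t f, 0 <= t -> cfun f -> cfun (T t f)) /\
      (forall t a f g, 0 <= t -> cfun f -> cfun g ->
         T t (fun x => a * f x + g x) = (fun x => a * T t f x + T t g x)) /\
      (forall t f, 0 <= t -> cfun f -> (forall x, 0 <= f x) ->
         forall x, 0 <= T t f x) /\
      (forall t f M, 0 <= t -> cfun f -> (forall x, `|f x| <= M) ->
         forall x, `|T t f x| <= M) /\
      (forall f, cfun f -> T 0 f = f) /\
      (forall s t f, 0 <= s -> 0 <= t -> cfun f -> T (s + t) f = T s (T t f)) /\
      (forall f, cfun f -> forall e, 0 < e -> exists2 d, 0 < d &
         forall t, 0 <= t -> t < d -> forall x, `|T t f x - f x| < e).

Definition generator_at (T : R -> (S -> R) -> (S -> R)) (f g : S -> R) : Prop :=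
  cfun f /\
  forall e, 0 < e -> exists2 d, 0 < d &
    forall t, 0 < t -> t < d -> forall x, `|(T t f x - f x) / t - g x| < e.

(* Rs is the resolvent (lambda - A)^-1 of the generator A of T, lambda > 0:
   for every f in C(S), Rs lambda f lies in D(A) and
   (lambda - A)(Rs lambda f) = f, i.e. A (Rs lambda f) = lambda Rs lambda f - f. *)
Definition is_resolvent (T : R -> (S -> R) -> (S -> R))
    (Rs : R -> (S -> R) -> (S -> R)) : Prop :=
  forall lam f, 0 < lam -> cfun f ->
    generator_at T (Rs lam f) (fun x => lam * Rs lam f x - f x).

Definition is_exit_law_LT (Rs : R -> (S -> R) -> (S -> R))
    (l : R -> S -> R) : Prop :=
      (forall lam, 0 < lam -> cfun (l lam)) /\
      (forall lam0, 0 < lam0 -> exists2 d, 0 < d & exists M : R,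
         forall lam, 0 < lam -> `|lam - lam0| < d -> forall x, `|l lam x| <= M) /\
      (forall lam x, 0 < lam -> 0 <= l lam x) /\
      (exists lam, 0 < lam /\ exists x, l lam x != 0) /\
      (forall x, exists2 c : R, l ^~ x @ 0^'+ --> c & c <= 1) /\
      (forall lam mu, 0 < lam -> 0 < mu ->
         (fun x => (lam - mu) * Rs lam (l mu) x) = (fun x => l mu x - l lam x)).

End Feller.

From HB Require Import structures.
From mathcomp Require Import all_boot all_order all_algebra.
From mathcomp Require Import all_classical all_reals all_analysis.
From mathcomp Require Import measurable_realfun ring lra.
Set Implicit Arguments. Unset Strict Implicit. Unset Printing Implicit Defensive.
Import Order.TTheory GRing.Theory Num.Theory.
Import numFieldNormedType.Exports.
Local Open Scope classical_set_scope.
Local Open Scope ring_scope.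

(* By the resolvent equation, l_lam = l_1 - (lam - 1) R_lam l_1.  The maximum
   principle gives |R_lam f| <= |f| / lam, and lam R_lam l_1 -> l_1 pointwise as
   lam -> oo, so l_lam(x) -> 0; since m_x({0}) <= l_lam(x) for every lam, the atom
   at 0 vanishes.
   The limit lam R_lam g -> g is obtained without Laplace integrals of the
   semigroup: u = R_lam g satisfies T(h) u ~ (1 + h lam) u - h g, so along the
   grid t = k h the quantity lam T(t) u(x) - g(x) is multiplied by 1 + h lam at
   each step up to errors of order h lam eps, while staying bounded by 2 |g|;
   this forces it to be small at t = 0. *)

Section GrowthBounds.
Variable R : realFieldType.

Lemma geometric_growth_linear_lb (q : R) (D : nat -> R) n : 0 <= q -> 0 <= D 0%N ->
  (forall k, (k < n)%N -> (1 + q) * D k <= D k.+1) ->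
  (1 + n%:R * q) * D 0%N <= D n.
Proof.
move=> q0 D00; elim: n => [|n IH] HD; first by rewrite mul0r addr0 mul1r.
have Dn := IH (fun k kn => HD k (leqW kn)).
apply: le_trans (HD n (ltnSn n)); rewrite -natr1.
have q1 : 0 <= 1 + q by lra.
have := ler_wpM2l q1 Dn.
have : 0 <= n%:R * q * q * D 0%N by rewrite !mulr_ge0.
nra.
Qed.

Lemma perturbed_growth_start_le (q c B : R) (W : nat -> R) n : 0 <= q -> 0 <= B ->
  (forall k, (k < n)%N -> (1 + q) * W k - q * c <= W k.+1) ->
  W n <= c + B -> W 0%N <= c + B / (1 + n%:R * q).
Proof.
move=> q0 B0 HW WnB.
have nq_gt0 : 0 < 1 + n%:R * q by rewrite ltr_pwDl // mulr_ge0.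
have [W0c|cW0] := lerP (W 0%N) c.
  by have := divr_ge0 B0 (ltW nq_gt0); lra.
suff : (W 0%N - c) * (1 + n%:R * q) <= B by rewrite -ler_pdivlMr //; lra.
rewrite mulrC.
apply: le_trans (_ : W n - c <= B); last by lra.
apply: (@geometric_growth_linear_lb q (fun k => W k - c)) => [//||k kn]; first by lra.
by have := HW k kn; lra.
Qed.

Lemma perturbed_growth_start_norm_le (q c B : R) (W : nat -> R) n : 0 <= q -> 0 <= c ->
  (forall k, (k < n)%N -> `|W k.+1 - (1 + q) * W k| <= q * c) ->
  `|W n| <= B -> `|W 0%N| <= c + B / (1 + n%:R * q).
Proof.
move=> q0 c0 HW WnB; have B0 := le_trans (normr_ge0 _) WnB.
have qc0 : 0 <= q * c by rewrite mulr_ge0.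
move: WnB; rewrite !ler_norml => /andP [WnBl WnBr]; apply/andP; split.
- rewrite lerNl.
  apply: (@perturbed_growth_start_le q c B (fun k => - W k)) => [//|//|k kn|]; last by lra.
  by have := HW k kn; rewrite ler_norml => /andP []; lra.
- apply: perturbed_growth_start_le => [//|//|k kn|]; last by lra.
  by have := HW k kn; rewrite ler_norml => /andP []; lra.
Qed.

End GrowthBounds.

Section FellerResolvent.
Context {R : realType} {S : topologicalType}.

Lemma cfun_lin (a b : R) (f g : S -> R) : cfun f -> cfun g ->
  cfun (fun y => a * f y + b * g y).
Proof.
move=> cf cg y.
apply: cvgD; [apply: (cvgM (f := fun=> a)) | apply: (cvgM (f := fun=> b))];
  by [exact: cvg_cst | exact: cf | exact: cg].
Qed.

Variable T : R -> (S -> R) -> (S -> R).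
Hypothesis HT : is_feller_semigroup T.

Lemma feller_cst0 t : 0 <= t -> T t (fun=> 0) = (fun=> 0).
Proof.
case: HT => _ [Tlin _] t0.
have c0 : cfun (fun _ : S => 0 : R) by move=> ?; exact: cvg_cst.
have := Tlin t 1 _ _ t0 c0 c0.
have -> : (fun _ : S => 1 * 0 + 0 : R) = (fun=> 0).
  by apply/funext => ?; rewrite mul1r addr0.
by move=> E; apply/funext => y; have := congr1 (fun h => h y) E => /=; lra.
Qed.

Lemma feller_lin t a b f g : 0 <= t -> cfun f -> cfun g ->
  T t (fun y => a * f y + b * g y) = (fun y => a * T t f y + b * T t g y).
Proof.
move=> t0 cf cg; case: HT => _ [Tlin _].
have cbg : cfun (fun y => b * g y).
  by move=> y; apply: (cvgM (f := fun=> b)); [exact: cvg_cst | exact: cg].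
rewrite Tlin //.
have -> : (fun y => b * g y) = (fun y => b * g y + (fun=> 0) y).
  by apply/funext => y; rewrite addr0.
rewrite Tlin // ?feller_cst0 //; last by move=> ?; exact: cvg_cst.
by apply/funext => y; rewrite addr0.
Qed.

Lemma generator_le0 z w x : generator_at T z w ->
  (forall t, 0 < t -> T t z x <= z x) -> w x <= 0.
Proof.
case=> _ gen Tz_le; rewrite leNgt; apply/negP => wx_gt0.
have [d d0 quot_near] := gen _ wx_gt0.
have t0 : 0 < d / 2 by rewrite divr_gt0.
have td : d / 2 < d by lra.
have := quot_near (d / 2) t0 td x; rewrite ltr_norml => /andP [q_gt0 _].
have : (T (d / 2) z x - z x) / (d / 2) <= 0.
  by rewrite pmulr_lle0 ?invr_gt0 // subr_le0 Tz_le.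
lra.
Qed.

Lemma generator_ge0 z w x : generator_at T z w ->
  (forall t, 0 < t -> z x <= T t z x) -> 0 <= w x.
Proof.
case=> _ gen Tz_ge; rewrite leNgt; apply/negP => wx_lt0.
have /gen [d d0 quot_near] : 0 < - w x by rewrite oppr_gt0.
have t0 : 0 < d / 2 by rewrite divr_gt0.
have td : d / 2 < d by lra.
have := quot_near (d / 2) t0 td x; rewrite ltr_norml => /andP [_ q_lt0].
have : 0 <= (T (d / 2) z x - z x) / (d / 2).
  by rewrite divr_ge0 ?subr_ge0 ?Tz_ge // ltW.
lra.
Qed.

Lemma resolvent_norm_le (Sc : compact [set: S]) (lam M : R) z f : 0 < lam ->
  generator_at T z (fun y => lam * z y - f y) -> (forall y, `|f y| <= M) ->
  forall y, `|z y| <= M / lam.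
Proof.
move=> lam0 gz fM y; have cz : cfun z by case: gz.
have cnz : continuous (fun y => `|z y|) by move=> u; apply: cvg_norm; exact: cz.
have [x0 _ zmax] := compact_EVT_max (ex_intro _ y I) Sc (continuous_subspaceT cnz).
have {}zmax u : `|z u| <= `|z x0| by apply: zmax; rewrite inE.
case: HT => _ [_ [_ [Tcontr _]]].
have Tz_le t : 0 < t -> `|T t z x0| <= `|z x0|.
  by move=> t0; exact: Tcontr (ltW t0) cz zmax x0.
suff : lam * `|z x0| <= M.
  by rewrite ler_pdivlMr // mulrC; apply: le_trans; rewrite ler_pM2r.
have := fM x0; rewrite ler_norml => /andP [fl fr].
have [z0|z0] := lerP 0 (z x0).
- suff : lam * z x0 - f x0 <= 0 by rewrite ger0_norm //; lra.
  apply: (generator_le0 (x := x0) gz) => t /Tz_le; rewrite (ger0_norm z0) ler_norml; lra.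
- suff : 0 <= lam * z x0 - f x0 by rewrite ltr0_norm //; lra.
  apply: (generator_ge0 (x := x0) gz) => t /Tz_le; rewrite (ltr0_norm z0) ler_norml; lra.
Qed.

Lemma resolvent_grid_step (u g : S -> R) (h lam eps t : R) x :
  cfun u -> cfun g -> 0 < h -> 0 <= lam -> 0 <= t ->
  (forall y, `|(T h u y - u y) / h - (lam * u y - g y)| <= eps) ->
  `|(lam * T (t + h) u x - g x) - (1 + h * lam) * (lam * T t u x - g x)|
    <= h * lam * (eps + `|T t g x - g x|).
Proof.
move=> cu cg h0 lam0 t0 quot_near.
case: HT => Tc [_ [_ [Tcontr [_ [Tsg _]]]]].
pose r y := (T h u y - u y) / h - lam * u y.
have cr : cfun r.
  have -> : r = (fun y => h^-1 * T h u y + (- h^-1 - lam) * u y).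
    by apply/funext => y; rewrite /r; ring.
  exact/cfun_lin/cu/Tc/cu/ltW.
have Th : T h u = (fun y => (1 + h * lam) * u y + h * r y).
  by apply/funext => y; rewrite /r; field; rewrite gt_eqF.
have rg y : `|1 * r y + 1 * g y| <= eps.
  have -> : 1 * r y + 1 * g y = (T h u y - u y) / h - (lam * u y - g y).
    by rewrite /r; ring.
  exact: quot_near.
have -> : lam * T (t + h) u x - g x - (1 + h * lam) * (lam * T t u x - g x)
    = h * lam * (T t (fun y => 1 * r y + 1 * g y) x - (T t g x - g x)).
  by rewrite Tsg ?Th ?feller_lin //= ?ltW //; ring.
rewrite normrM ger0_norm ?mulr_ge0 ?(ltW h0) // ler_wpM2l ?mulr_ge0 ?(ltW h0) //.
apply: le_trans (ler_normB _ _) _; rewrite lerD2r.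
by apply: Tcontr => //; exact: cfun_lin.
Qed.

Lemma resolvent_approx (g u : S -> R) (K eps delta lam : R) x :
  cfun g -> (forall y, `|g y| <= K) -> 0 < eps -> 0 < delta ->
  (forall t, 0 <= t -> t < delta -> `|T t g x - g x| <= eps) ->
  0 < lam -> generator_at T u (fun y => lam * u y - g y) ->
  (forall y, `|u y| <= K / lam) ->
  `|lam * u x - g x| <= 2 * eps + 2 * K / (delta * lam).
Proof.
move=> cg gK eps0 delta0 g_near lam0 [cu /(_ eps eps0) [d d0 quot_near]] uK.
case: HT => _ [_ [_ [Tcontr [T0 _]]]].
pose N := (Num.Def.archi_bound (delta / d)).+1.
have N_gt0 : 0 < N%:R :> R by rewrite ltr0n.
pose h := delta / N%:R.
have h0 : 0 < h by rewrite divr_gt0.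
have hd : h < d.
  rewrite ltr_pdivrMr // mulrC -ltr_pdivrMr //.
  by apply: lt_le_trans (archi_boundP _) _; rewrite ?ler_nat ?divr_ge0 ?ltW.
have Nh : N%:R * h = delta by rewrite /h mulrC -mulrA mulVf ?mulr1 ?gt_eqF.
have q0 : 0 <= h * lam by rewrite mulr_ge0 // ltW.
pose W k := lam * T (k%:R * h) u x - g x.
have W_step k : (k < N)%N -> `|W k.+1 - (1 + h * lam) * W k| <= h * lam * (2 * eps).
  move=> kN; have kh0 : 0 <= k%:R * h by rewrite mulr_ge0 // ltW.
  rewrite /W -natr1 mulrDl mul1r.
  apply: le_trans (resolvent_grid_step _ cu cg h0 (ltW lam0) kh0 _) _.
    by move=> y; apply/ltW/quot_near.
  rewrite ler_wpM2l // [2 * _]mulr_natl mulr2n lerD2l.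
  by apply: g_near => //; rewrite -Nh ltr_pM2r // ltr_nat.
have W_end : `|W N| <= 2 * K.
  apply: le_trans (ler_normB _ _) _; rewrite normrM gtr0_norm // [2 * _]mulr_natl mulr2n.
  apply: lerD => //; rewrite mulrC -ler_pdivlMr //.
  by apply: Tcontr => //; rewrite mulr_ge0 // ltW.
have eps2_ge0 : 0 <= 2 * eps by rewrite mulr_ge0 // ltW.
have := perturbed_growth_start_norm_le q0 eps2_ge0 W_step W_end.
rewrite /W mul0r T0 // mulrA Nh => /le_trans; apply.
have K0 : 0 <= K := le_trans (normr_ge0 _) (gK x).
have dl0 : 0 < delta * lam by rewrite mulr_gt0.
by rewrite lerD2l ler_wpM2l ?mulr_ge0 // lef_pV2 ?posrE //; lra.
Qed.

End FellerResolvent.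

Lemma exit_law_LT_small (R : realType) (S : topologicalType)
    (T Rs : R -> (S -> R) -> (S -> R)) (l : R -> S -> R) (x : S) :
  compact [set: S] -> is_feller_semigroup T -> is_resolvent T Rs ->
  is_exit_law_LT Rs l -> forall e : R, 0 < e -> exists2 lam, 0 < lam & l lam x <= e.
Proof.
move=> Sc HT HR [lc [lb [_ [_ [_ lres]]]]] e e0.
have cg := lc 1 ltr01.
have [d d0 [K gK]] := lb 1 ltr01.
have {d d0}gK y : `|l 1 y| <= K by apply: gK => //; rewrite subrr normr0.
have K0 : 0 <= K := le_trans (normr_ge0 _) (gK x).
pose eps := e / 3; have eps0 : 0 < eps by rewrite divr_gt0.
have [delta delta0 g_near] : exists2 delta : R, 0 < delta &
    forall t, 0 <= t -> t < delta -> forall y, `|T t (l 1) y - l 1 y| < eps.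
  by case: HT => _ [_ [_ [_ [_ [_ Tsc]]]]]; exact: Tsc.
pose C := 2 * K / delta + K.
have C0 : 0 <= C by rewrite addr_ge0 // divr_ge0 ?mulr_ge0 // ltW.
pose lam := C / eps + 1.
have lam0 : 0 < lam by rewrite ltr_wpDl // divr_ge0 // ltW.
exists lam => //.
have gu := HR lam (l 1) lam0 cg.
have uK := resolvent_norm_le HT Sc lam0 gu gK.
have g_near_x t : 0 <= t -> t < delta -> `|T t (l 1) x - l 1 x| <= eps.
  by move=> t0 td; exact/ltW/g_near.
have := resolvent_approx HT cg gK eps0 delta0 g_near_x lam0 gu uK.
have := congr1 (fun f => f x) (lres lam 1 lam0 ltr01) => /=.
set u := Rs lam (l 1) in uK *.
have -> : 2 * K / (delta * lam) = C / lam - K / lam.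
  by rewrite /C; field; rewrite !gt_eqF.
have C_lam : C / lam <= eps.
  by rewrite ler_pdivrMr // /lam mulrDr mulrCA mulfV ?gt_eqF // mulr1; lra.
have := uK x; rewrite !ler_norml => /andP [_ ux_le] res /andP [approx _].
have : 0 <= K / lam by rewrite divr_ge0 // ltW.
rewrite /eps in C_lam approx; lra.
Qed.

Lemma mass0_le_laplace (R : realType) (m : {measure set (measurableTypeR R) -> \bar R})
    (lam : R) :
  (m [set 0%R] <= \int[m]_(t in [set t : measurableTypeR R | (0 <= t)%R])
                  (expR (- (lam * t)))%:E)%E.
Proof.
have nonneg_itv : [set t : measurableTypeR R | 0 <= t] = `[0, +oo[%classic.
  by apply/seteqP; split => t /=; rewrite in_itv /= andbT.
have mexp : measurable_fun [set t : measurableTypeR R | 0 <= t]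
    (fun t : R => (expR (- (lam * t)))%:E).
  apply/measurable_EFinP; apply: measurable_funTS; apply: measurableT_comp => //.
  apply: continuous_measurable_fun => t; apply: continuousN.
  by apply: cvgM; [exact: cvg_cst | exact: cvg_id].
rewrite -[m _]mul1e -integral_cst //.
rewrite (eq_integral (fun t : measurableTypeR R => (expR (- (lam * t)))%:E)); last first.
  by move=> t; rewrite inE /= => ->; rewrite mulr0 oppr0 expR0.
apply: ge0_subset_integral => //; first by rewrite nonneg_itv; exact: measurable_itv.
by move=> t /= ->.
Qed.

Theorem proposition2 (R : realType) (S : metricType R)
  (Scompact : compact [set: S])
  (Sseparable : exists D : set S, countable D /\ closure D = [set: S])
  (T : R -> (S -> R) -> (S -> R)) (Rs : R -> (S -> R) -> (S -> R))
  (l : R -> S -> R) :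
  is_feller_semigroup T -> is_resolvent T Rs -> is_exit_law_LT Rs l ->
  forall (x : S) (m : {measure set (measurableTypeR R) -> \bar R}),
    (m [set: measurableTypeR R] <= 1)%E ->
    m [set t : measurableTypeR R | t < 0] = 0%E ->
    (forall lam : R, 0 < lam ->
       (l lam x)%:E =
         (\int[m]_(t in [set t : measurableTypeR R | (0 <= t)%R])
            (expR (- (lam * t)))%:E)%E) ->
    m [set 0] = 0%E.
Proof.
move=> HT HR HL x m _ _ laplace_m.
apply/le_anti; rewrite measure_ge0 andbT; apply/lee_addgt0Pr => e e0.
have [lam lam0 small] := exit_law_LT_small x Scompact HT HR HL e0.
by rewrite add0e (le_trans (mass0_le_laplace m lam)) // -laplace_m // lee_fin.
Qed.
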